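(* Let $G=(S,C,H)$ be a spider graph (thin with $r\ge2$, or thick with $r\ge3$) and $T$ an MDNS of $G$. Then $|\widehat T\cap H|\le\tilde\gamma_{gr}^{\times2}(G[H])$ and $|\widehat T\cap(C\cup S)|\le\tilde\gamma_{gr}^{\times2}(G[C\cup S])$.
   Context: Graphs are finite, simple, undirected; $N[v]$ closed neighborhood. A sequence of distinct vertices $(v_1,\dots,v_k)$ is a double neighborhood sequence (DNS) if for each $i$ some $w\in N[v_i]$ satisfies $|\{j<i:w\in N[v_j]\}|\le1$; an MDNS is a DNS of maximum length and $\tilde\gamma_{gr}^{\times2}$ is that length ($0$ for the graph with no vertices). $\widehat T$ is the vertex set of $T$. A spider graph $G=(S,C,H)$ of weight $r$: $V(G)$ is partitioned into $S=\{s_1,\dots,s_r\}$ (stable), $C=\{c_1,\dots,c_r\}$ (clique), $H$ (possibly empty, arbitrary edges inside), all edges between $C$ and $H$, none between $H$ and $S$; thin: $s_ic_j\in E$ iff $i=j$; thick: $s_ic_j\in E$ iff $i\neq j$. *)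

From mathcomp Require Import all_boot.
Set Implicit Arguments. Unset Strict Implicit. Unset Printing Implicit Defensive.

(* A finite simple graph: vertex type T : finType, adjacency e : rel T,
   assumed symmetric and irreflexive where used. *)

Section DNS.
Variables (T : finType) (e : rel T).

Definition closedN_in (A : {set T}) (v w : T) : bool :=
  (w \in A) && ((w == v) || e v w).

(* s is a double neighborhood sequence of the induced subgraph G[A]:
   distinct vertices of A, and for each position i there is w in N[s_i]
   (in G[A]) with |{j < i : w in N[s_j]}| <= 1. *)
Definition is_DNS_in (A : {set T}) (s : seq T) : bool :=
  [&& uniq s, all (fun v => v \in A) s &
   [forall i : 'I_(size s),
     [exists w : T,
       closedN_in A (tnth (in_tuple s) i) w &&
       (#|[set j : 'I_(size s) | (j < i) && closedN_in A (tnth (in_tuple s) j) w]|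
          <= 1)]]].

(* tilde-gamma_gr^{x2}(G[A]) : maximum length of a DNS of G[A]
   (0 when A is empty). Any DNS of G[A] has length <= #|A| <= #|T|. *)
Definition gr2_in (A : {set T}) : nat :=
  \max_(n < #|T|.+1 | [exists t : n.-tuple T, is_DNS_in A t]) n.

Definition is_DNS (s : seq T) : bool := is_DNS_in [set: T] s.
Definition is_MDNS (s : seq T) : Prop :=
  is_DNS s /\ forall s' : seq T, is_DNS s' -> size s' <= size s.

Definition spiderS (r : nat) (s : 'I_r -> T) : {set T} := [set s i | i : 'I_r].
Definition spiderC (r : nat) (c : 'I_r -> T) : {set T} := [set c i | i : 'I_r].
Definition spiderH (r : nat) (s c : 'I_r -> T) : {set T} :=
  ~: (spiderS s :|: spiderC c).

Definition is_spider (r : nat) (s c : 'I_r -> T) : Prop :=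
  injective s /\ injective c /\
  (forall i j, s i != c j) /\
  (forall i j, ~~ e (s i) (s j)) /\
  (forall i j, i != j -> e (c i) (c j)) /\
  (forall i h, h \in spiderH s c -> e (c i) h) /\
  (forall i h, h \in spiderH s c -> ~~ e (s i) h).

Definition thin_spider (r : nat) (s c : 'I_r -> T) : Prop :=
  is_spider s c /\ forall i j, e (s i) (c j) = (i == j).
Definition thick_spider (r : nat) (s c : 'I_r -> T) : Prop :=
  is_spider s c /\ forall i j, e (s i) (c j) = (i != j).

End DNS.

From mathcomp Require Import all_boot.
Set Implicit Arguments. Unset Strict Implicit. Unset Printing Implicit Defensive.

(** Deleting the vertices outside a set A from a DNS of G yields a DNS of
    G[A] unless the witness of some vertex v of A lies outside A.  In a
    spider this witness can always be replaced.  For A = H, such a witness is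
    a vertex of C, which is adjacent to all of H, so at most one vertex of H
    precedes v and v is its own witness.  For A = C u S, the vertex v is some
    c_j and the witness lies in H, which is adjacent to all of C, so at most
    one vertex of C precedes c_j.  Then s_j (thin) resp. an s_k with k <> j
    and no earlier c_m with m <> k (thick) is a witness of c_j in G[C u S]
    dominating no earlier vertex except possibly itself. *)

Lemma card_prefix_count (T : Type) (x0 : T) (s : seq T) (Q : pred T) (i : nat) :
  #|[set j : 'I_(size s) | (j < i) && Q (tnth (in_tuple s) j)]| = count Q (take i s).
Proof.
rewrite -sum1_card -sum1_count (big_nth x0) size_take_min.
rewrite (big_nat_widen _ _ _ _ _ (geq_minr i (size s))) big_mkord.
apply: eq_big => [j|//]; rewrite in_set (tnth_nth x0) /= leq_min ltn_ord andbT.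
by rewrite andbC; case: ltnP => ji; rewrite /= ?andbF ?nth_take.
Qed.

Lemma count_le1_uniq (T : eqType) (P : pred T) (s : seq T) (x : T) :
  uniq s -> {in s, forall u, P u -> u = x} -> count P s <= 1.
Proof.
move=> Us Px; rewrite -size_filter.
apply: (@uniq_leq_size _ _ [:: x]); first exact: filter_uniq.
by move=> u; rewrite mem_filter inE => /andP[Pu us]; rewrite (Px u).
Qed.

Lemma count_le1_eq (T : eqType) (P : pred T) (s : seq T) :
  count P s <= 1 -> {in s &, forall x y, P x -> P y -> x = y}.
Proof.
move=> le1 x y xs ys Px Py.
have xP : x \in filter P s by rewrite mem_filter Px.
have yP : y \in filter P s by rewrite mem_filter Py.
rewrite -size_filter in le1.
by case: (filter P s) le1 xP yP => [|z [|]] //= _; rewrite !inE => /eqP-> /eqP->.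
Qed.

Lemma filter_eq_cat_cons (T : Type) (a : pred T) (t p' q' : seq T) (v : T) :
  filter a t = p' ++ v :: q' -> exists p q, t = p ++ v :: q /\ filter a p = p'.
Proof.
elim: t p' => [|x t IH] p' /=; first by case: p'.
case: ifP => ax; last first.
  by case/IH=> p [q [-> <-]]; exists (x :: p), q; rewrite /= ax.
case: p' => [|y p'] /= [<-]; first by exists [::], t.
by case/IH=> p [q [-> <-]]; exists (x :: p), q; rewrite /= ax.
Qed.

Lemma exists_ord_neq (r : nat) (j : 'I_r) : 1 < r -> exists k : 'I_r, k != j.
Proof.
move=> r_gt1; have : 0 < #|[set~ j]| by rewrite cardsC1 card_ord -subn1 subn_gt0.
by case/card_gt0P=> k; rewrite !inE; exists k.
Qed.

Section DNSRestriction.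
Variables (T : finType) (e : rel T).

Definition dns_step (A : {set T}) (p : seq T) (v : T) : bool :=
  [exists w, closedN_in e A v w && (count (closedN_in e A ^~ w) p <= 1)].

Lemma dns_step_tnth (A : {set T}) (s : seq T) (x0 : T) (i : 'I_(size s)) :
  [exists w, closedN_in e A (tnth (in_tuple s) i) w &&
     (#|[set j : 'I_(size s) | (j < i) && closedN_in e A (tnth (in_tuple s) j) w]| <= 1)]
  = dns_step A (take i s) (nth x0 s i).
Proof.
apply: eq_existsb => w.
by rewrite (card_prefix_count x0 s (closedN_in e A ^~ w)) (tnth_nth x0).
Qed.

Lemma is_DNS_in_splitP (A : {set T}) (s : seq T) :
  is_DNS_in e A s <->
  [/\ uniq s, {subset s <= A} & forall p v q, s = p ++ v :: q -> dns_step A p v].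
Proof.
split.
  case/and3P=> Us /allP sA /forallP Hs; split=> // p v q Es.
  have ltps : size p < size s by rewrite Es size_cat /= addnS ltnS leq_addr.
  have := Hs (Ordinal ltps); rewrite (dns_step_tnth _ v) /=.
  by rewrite Es nth_cat ltnn subnn take_size_cat.
case=> Us /allP sA Hs; rewrite /is_DNS_in Us sA; apply/forallP => i.
have x0 := tnth (in_tuple s) i.
rewrite (dns_step_tnth _ x0); apply: (Hs _ _ (drop i.+1 s)).
by rewrite -drop_nth // cat_take_drop.
Qed.

Lemma size_le_gr2_in (A : {set T}) (s : seq T) :
  is_DNS_in e A s -> size s <= gr2_in e A.
Proof.
move=> Ds; have Us : uniq s by case/and3P: Ds.
have lt_s : size s < #|T|.+1 by rewrite ltnS -(card_uniqP Us) max_card.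
apply: (@leq_bigmax_cond _ _ (@nat_of_ord _) (Ordinal lt_s)).
by apply/existsP; exists (in_tuple s).
Qed.

(* Whenever the witness [w] of [v] in G is lost in G[A], there is another one in G[A]. *)
Definition witness_repairable (A : {set T}) : Prop :=
  forall p v w, uniq (v :: p) -> {subset v :: p <= A} -> w \notin A -> e v w ->
  count (closedN_in e [set: T] ^~ w) p <= 1 -> dns_step A p v.

Lemma filter_is_DNS_in (A : {set T}) (t : seq T) :
  is_DNS e t -> witness_repairable A -> is_DNS_in e A [seq v <- t | v \in A].
Proof.
case/is_DNS_in_splitP=> Ut _ Ht repA.
apply/is_DNS_in_splitP; split; first exact: filter_uniq.
  by move=> v; rewrite mem_filter => /andP[].
move=> p' v q' Et'; have [p [q [Et Ep']]] := filter_eq_cat_cons Et'; subst p'.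
have : v \in [seq u <- t | u \in A] by rewrite Et' mem_cat mem_head orbT.
rewrite mem_filter => /andP[vA _].
have count_filter_le Q : count Q [seq u <- p | u \in A] <= count Q p.
  by rewrite count_filter sub_count // => u /andP[].
have [w /andP[vw pw]] := existsP (Ht _ _ _ Et).
case: (boolP (w \in A)) => wA.
  have vw_A : closedN_in e A v w by move: vw; rewrite /closedN_in wA in_setT.
  apply/existsP; exists w; rewrite vw_A /=.
  apply: leq_trans (count_filter_le _) (leq_trans (sub_count _ _) pw) => u.
  by rewrite /closedN_in in_setT => /andP[].
have evw : e v w.
  move: vw; rewrite /closedN_in in_setT /= => /orP[/eqP wv|//].
  by rewrite wv vA in wA.
apply: repA wA evw (leq_trans (count_filter_le _) pw).
  have := filter_uniq (fun u => u \in A) Ut.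
  by rewrite Et' -cat_rcons cat_uniq rcons_uniq => /andP[+ _].
by move=> u; rewrite inE mem_filter => /orP[/eqP->|/andP[]].
Qed.

Lemma card_restrict_DNS_le_gr2_in (A : {set T}) (t : seq T) :
  is_DNS e t -> witness_repairable A -> #|[set v in t | v \in A]| <= gr2_in e A.
Proof.
move=> Ht repA; have DA := filter_is_DNS_in Ht repA.
have -> : #|[set v in t | v \in A]| = size [seq v <- t | v \in A].
  rewrite -(card_uniqP (filter_uniq _ (proj1 (andP Ht)))).
  by apply: eq_card => x; rewrite inE mem_filter andbC.
exact: size_le_gr2_in.
Qed.

End DNSRestriction.

Section Spider.
Variables (T : finType) (e : rel T) (r : nat) (s c : 'I_r -> T).
Hypotheses (e_sym : symmetric e) (spider : is_spider e s c).

Local Notation H := (spiderH s c).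
Local Notation CS := (spiderC c :|: spiderS s).

Lemma spiderH_repairable : witness_repairable e H.
Proof.
have [_ [_ [_ [_ [_ [CH SH]]]]]] := spider.
move=> p v w _ pA; rewrite !inE negbK => wSC vw count_w.
have vH : v \in H by apply: pA; rewrite mem_head.
have [i wi] : exists i, w = c i.
  case/orP: wSC => /imsetP[i _ wi]; last by exists i.
  by move: (SH i v vH); rewrite -wi e_sym vw.
subst w.
apply/existsP; exists v; rewrite /closedN_in vH eqxx /=.
apply: leq_trans (count_size _ _) (leq_trans (eq_leq _) count_w).
apply/esym/eqP; rewrite -all_count; apply/allP => u up.
by rewrite /closedN_in in_setT /= e_sym CH ?orbT // pA // inE up orbT.
Qed.

Lemma closedN_CS_s (k : 'I_r) (u : T) : u \in CS ->
  closedN_in e CS u (s k) -> u = s k \/ exists2 m, u = c m & e (s k) (c m).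
Proof.
have [_ [_ [SC [SS _]]]] := spider.
case/setUP=> /imsetP[m _ ->]; rewrite /closedN_in => /andP[_].
  by rewrite e_sym (negbTE (SC _ _)) /=; right; exists m.
by rewrite (negbTE (SS _ _)) orbF eq_sym => /eqP->; left.
Qed.

Lemma spiderCS_repairable_of
    (choose : forall j p, c j \notin p -> {subset p <= CS} ->
       count (mem (spiderC c)) p <= 1 ->
       exists2 k, e (s k) (c j) & {in p, forall u, closedN_in e CS u (s k) -> u = s k}) :
  witness_repairable e CS.
Proof.
have [_ [_ [_ [_ [_ [CH SH]]]]]] := spider.
move=> p v w /andP[vp Up] pA wCS vw count_w.
have wH : w \in H by rewrite in_setC setUC.
have vCS : v \in CS by apply: pA; rewrite mem_head.
have [j vj] : exists j, v = c j.
  case/setUP: vCS => /imsetP[j _ vj]; first by exists j.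
  by move: (SH j w wH); rewrite -vj vw.
subst v; have pCS : {subset p <= CS} by move=> u up; apply: pA; rewrite inE up orbT.
have count_C : count (mem (spiderC c)) p <= 1.
  apply: leq_trans count_w; apply: sub_count => u /imsetP[m _ ->].
  by rewrite /closedN_in in_setT /= CH ?orbT.
have [k skcj privk] := choose j p vp pCS count_C.
have cj_sk : closedN_in e CS (c j) (s k).
  by rewrite /closedN_in (subsetP (subsetUr _ _)) ?imset_f //= e_sym skcj orbT.
apply/existsP; exists (s k); rewrite cj_sk.
exact: count_le1_uniq Up privk.
Qed.

Lemma thin_spiderCS_repairable :
  (forall i j, e (s i) (c j) = (i == j)) -> witness_repairable e CS.
Proof.
move=> thin; apply: spiderCS_repairable_of => j p cjp pCS _.
exists j; first by rewrite thin.
move=> u up /(closedN_CS_s (pCS u up))[//|[m um]].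
by rewrite thin => /eqP jm; move: cjp; rewrite jm -um up.
Qed.

Lemma thick_spiderCS_repairable :
  1 < r -> (forall i j, e (s i) (c j) = (i != j)) -> witness_repairable e CS.
Proof.
have [_ [cinj _]] := spider.
move=> r_gt1 thick; apply: spiderCS_repairable_of => j p cjp pCS count_C.
have [k kj Ck] : exists2 k, k != j & {in p, forall u, u \in spiderC c -> u = c k}.
  case: (boolP (has (mem (spiderC c)) p)) => [/hasP[u up uC]|].
    have /imsetP[k _ uk] := uC.
    exists k; first by apply: contraNneq cjp => <-; rewrite -uk.
    by move=> u' u'p u'C; apply: (count_le1_eq count_C); rewrite -?uk.
  move/hasPn=> noC; have [k kj] := exists_ord_neq j r_gt1.
  by exists k => // u /noC /negP.
exists k; first by rewrite thick.
move=> u up /(closedN_CS_s (pCS u up))[//|[m um]].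
rewrite thick um => km.
have /cinj mk : c m = c k by apply: Ck; [rewrite -um | exact: imset_f].
by rewrite mk eqxx in km.
Qed.

End Spider.

Theorem lemma6 (T : finType) (e : rel T) (r : nat) (s c : 'I_r -> T)
  (t : seq T) :
  symmetric e -> irreflexive e ->
  ((thin_spider e s c /\ 2 <= r) \/ (thick_spider e s c /\ 3 <= r)) ->
  is_MDNS e t ->
  #|[set v in t | v \in spiderH s c]| <= gr2_in e (spiderH s c) /\
  #|[set v in t | v \in spiderC c :|: spiderS s]|
    <= gr2_in e (spiderC c :|: spiderS s).
Proof.
move=> e_sym _ spider [Ht _].
have [Hs CS_repairable] : is_spider e s c /\ witness_repairable e (spiderC c :|: spiderS s).
  case: spider => [[[Hs thin] _]|[[Hs thick] r_ge3]]; split=> //.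
    exact: thin_spiderCS_repairable.
  exact: thick_spiderCS_repairable (ltnW r_ge3) thick.
split; apply: card_restrict_DNS_le_gr2_in => //.
exact: spiderH_repairable.
Qed.
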